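(* Let $(X,\ll)$ be a past-regular and future-regular chronological set, and let $\eta=\{x_n\}_n$ be a future-directed chain in $X$. Then for every $x\in X$: (a) $x\in \hat L(\eta)$ if and only if $I^-(x)=I^-(\eta)$; (b) $x\in \check L(\eta)$ if and only if $I^+(x)\subset \uparrow\eta$ and $I^+(x)$ is maximal (with respect to inclusion) among the IFs contained in $\uparrow\eta$. Dually, if $\eta$ is a past-directed chain, then $x\in \check L(\eta)$ iff $I^+(x)=I^+(\eta)$, and $x\in\hat L(\eta)$ iff $I^-(x)\subset\downarrow\eta$ and $I^-(x)$ is maximal among the IPs contained in $\downarrow\eta$.
   Context: A chronological set $(X,\ll)$ is a set $X$ with a transitive, anti-reflexive binary relation $\ll$ such that (i) every $x$ satisfies $x\ll y$ or $y\ll x$ for some $y\in X$, and (ii) there is a countable $\mathcal S\subset X$ with: for all $x\ll y$ there is $s\in\mathcal S$ with $x\ll s\ll y$. For $S\subset X$, $I^-(S)=\{y: y\ll x \text{ for some } x\in S\}$, $I^+(S)=\{y: x\ll y \text{ for some } x\in S\}$. A past set is $P\subset X$ with $P=I^-(P)$; an IP (indecomposable past set) is a nonempty past set that cannot be written as the union of two past sets both different from it; future sets and IFs are defined dually. $X$ is past-regular (resp. future-regular) if $I^-(x)$ is an IP (resp. $I^+(x)$ is an IF) for every $x\in X$. A future-directed (resp. past-directed) chain is a sequence $\{x_n\}_n$ with $x_n\ll x_{n+1}$ (resp. $x_{n+1}\ll x_n$) for all $n$; $I^\pm(\eta)$ means $I^\pm$ of the set of its terms. The common future of $S\subset X$ is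 $\uparrow S=I^+(\{y\in X: x\ll y\ \forall x\in S\})$ and the common past is $\downarrow S=I^-(\{y\in X: y\ll x\ \forall x\in S\})$. For a sequence of subsets $A_n$, $LI(\{A_n\})$ is the set of points belonging to $A_n$ for all sufficiently large $n$ and $LS(\{A_n\})$ the set of points belonging to infinitely many $A_n$. For a sequence $\sigma=\{x_n\}_n$ in $X$: $x\in\hat L(\sigma)$ iff $I^-(x)\subset LI(\{I^-(x_n)\})$ and $I^-(x)$ is a maximal IP (w.r.t. inclusion) among IPs contained in $LS(\{I^-(x_n)\})$; dually $x\in\check L(\sigma)$ iff $I^+(x)\subset LI(\{I^+(x_n)\})$ and $I^+(x)$ is a maximal IF among IFs contained in $LS(\{I^+(x_n)\})$. *)

From Stdlib Require Import Classical.

Section Chrono.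
Context {X : Type}.
Variable rel : X -> X -> Prop.   (* x << y  is  rel x y *)

Definition set_incl (A B : X -> Prop) : Prop := forall x, A x -> B x.
Definition set_eq (A B : X -> Prop) : Prop := forall x, A x <-> B x.

Definition countable_set (S : X -> Prop) : Prop :=
  exists g : X -> nat, forall x y, S x -> S y -> g x = g y -> x = y.

Definition chronological : Prop :=
  (forall x y z, rel x y -> rel y z -> rel x z) /\
  (forall x, ~ rel x x) /\
  (forall x, exists y, rel x y \/ rel y x) /\
  (exists S : X -> Prop, countable_set S /\
     forall x y, rel x y -> exists s, S s /\ rel x s /\ rel s y).

Definition Ipast (S : X -> Prop) : X -> Prop := fun y => exists x, S x /\ rel y x.
Definition Ifut (S : X -> Prop) : X -> Prop := fun y => exists x, S x /\ rel x y.
Definition Ipast_pt (x : X) : X -> Prop := fun y => rel y x.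
Definition Ifut_pt (x : X) : X -> Prop := fun y => rel x y.

Definition past_set (P : X -> Prop) : Prop := set_eq P (Ipast P).
Definition future_set (F : X -> Prop) : Prop := set_eq F (Ifut F).

Definition IP (P : X -> Prop) : Prop :=
  (exists x, P x) /\ past_set P /\
  ~ (exists A B, past_set A /\ past_set B /\ ~ set_eq A P /\ ~ set_eq B P /\
        set_eq P (fun z => A z \/ B z)).
Definition IF (F : X -> Prop) : Prop :=
  (exists x, F x) /\ future_set F /\
  ~ (exists A B, future_set A /\ future_set B /\ ~ set_eq A F /\ ~ set_eq B F /\
        set_eq F (fun z => A z \/ B z)).

Definition past_regular : Prop := forall x, IP (Ipast_pt x).
Definition future_regular : Prop := forall x, IF (Ifut_pt x).

Definition fut_chain (s : nat -> X) : Prop := forall n, rel (s n) (s (S n)).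
Definition past_chain (s : nat -> X) : Prop := forall n, rel (s (S n)) (s n).

Definition range (s : nat -> X) : X -> Prop := fun x => exists n, s n = x.

Definition common_future (S : X -> Prop) : X -> Prop :=
  Ifut (fun y => forall x, S x -> rel x y).
Definition common_past (S : X -> Prop) : X -> Prop :=
  Ipast (fun y => forall x, S x -> rel y x).

Definition LI (A : nat -> X -> Prop) : X -> Prop :=
  fun x => exists N, forall n, N <= n -> A n x.
Definition LS (A : nat -> X -> Prop) : X -> Prop :=
  fun x => forall N, exists n, N <= n /\ A n x.

Definition maximal_IP_in (P A : X -> Prop) : Prop :=
  IP P /\ set_incl P A /\
  forall Q, IP Q -> set_incl Q A -> set_incl P Q -> set_eq Q P.
Definition maximal_IF_in (F A : X -> Prop) : Prop :=
  IF F /\ set_incl F A /\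
  forall Q, IF Q -> set_incl Q A -> set_incl F Q -> set_eq Q F.

Definition Lhat (s : nat -> X) (x : X) : Prop :=
  set_incl (Ipast_pt x) (LI (fun n => Ipast_pt (s n))) /\
  maximal_IP_in (Ipast_pt x) (LS (fun n => Ipast_pt (s n))).
Definition Lcheck (s : nat -> X) (x : X) : Prop :=
  set_incl (Ifut_pt x) (LI (fun n => Ifut_pt (s n))) /\
  maximal_IF_in (Ifut_pt x) (LS (fun n => Ifut_pt (s n))).

End Chrono.

(* Along eta the pasts I^-(eta n) increase,
   so their lim sup and lim inf both contain the past I^-(eta) of the whole
   chain, the lim sup being equal to it, and this set is an IP.  Hence the only
   maximal IP inside the lim sup is I^-(eta) itself, which gives part (a).  The
   futures I^+(eta n) decrease; a point of their lim sup lies above every eta n,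
   so a future set inside the lim sup lies in the common future of eta, while
   the common future lies in the lim inf.  Hence the maximal IFs in the lim sup
   are exactly the maximal IFs in the common future, which gives part (b).

   The statement for
   past chains is the same statement for the reversed relation, under which
   pasts and futures, IPs and IFs, Lhat and Lcheck are exchanged. *)

From Stdlib Require Import Classical Lia.

Section MaximalSets.
Context {X : Type} (rel : X -> X -> Prop).

Lemma maximal_IP_in_IP (P C A : X -> Prop) :
  IP rel P -> IP rel C -> set_eq C A ->
  (maximal_IP_in rel P A <-> set_eq P C).
Proof.
  intros HP HC HCA. split.
  - intros [_ [HPA Hmax]] y. split.
    + intro Py. apply HCA, HPA, Py.
    + apply (Hmax C HC).
      * intros z Cz. apply HCA, Cz.
      * intros z Pz. apply HCA, HPA, Pz.
  - intros HPC. split; [exact HP | split].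
    + intros y Py. apply HCA, HPC, Py.
    + intros Q _ HQA HPQ y. split.
      * intro Qy. apply HPC, HCA, HQA, Qy.
      * apply HPQ.
Qed.

Lemma maximal_IF_in_shrink (F A B : X -> Prop) :
  set_incl A B -> (forall Q, IF rel Q -> set_incl Q B -> set_incl Q A) ->
  (maximal_IF_in rel F A <-> maximal_IF_in rel F B).
Proof.
  intros HAB HIF. split.
  - intros [HF [HFA Hmax]]. split; [exact HF | split].
    + intros y Fy. apply HAB, HFA, Fy.
    + intros Q HQ HQB. apply Hmax; [exact HQ | apply HIF; assumption].
  - intros [HF [HFB Hmax]]. split; [exact HF | split].
    + apply HIF; assumption.
    + intros Q HQ HQA. apply Hmax; [exact HQ |].
      intros y Qy. apply HAB, HQA, Qy.
Qed.

End MaximalSets.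

Lemma LI_incl_LS {X : Type} (A : nat -> X -> Prop) : set_incl (LI A) (LS A).
Proof.
  intros y [N HN] M. exists (N + M). split; [lia | apply HN; lia].
Qed.

Section FutureChain.
Context {X : Type} (rel : X -> X -> Prop).
Hypothesis rel_trans : forall x y z, rel x y -> rel y z -> rel x z.
Variable eta : nat -> X.
Hypothesis eta_chain : fut_chain rel eta.

Lemma chain_lt (n m : nat) : n < m -> rel (eta n) (eta m).
Proof.
  induction 1.
  - apply eta_chain.
  - eapply rel_trans; [exact IHle | apply eta_chain].
Qed.

Lemma chain_in_past (n : nat) : Ipast rel (range eta) (eta n).
Proof. exists (eta (S n)). split; [exists (S n); reflexivity | apply eta_chain]. Qed.

Lemma LS_past_chain (y : X) :
  LS (fun n => Ipast_pt rel (eta n)) y <-> Ipast rel (range eta) y.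
Proof.
  split.
  - intro Hy. destruct (Hy 0) as [n [_ Hn]].
    exists (eta n). split; [exists n; reflexivity | exact Hn].
  - intros [z [[n <-] Hy]] N. exists (S (N + n)). split; [lia |].
    eapply rel_trans; [exact Hy | apply chain_lt; lia].
Qed.

Lemma past_chain_in_LI :
  set_incl (Ipast rel (range eta)) (LI (fun n => Ipast_pt rel (eta n))).
Proof.
  intros y [z [[n <-] Hy]]. exists (S n). intros m Hm.
  eapply rel_trans; [exact Hy | apply chain_lt; lia].
Qed.

Definition cofinal_in (C : X -> Prop) : Prop :=
  forall N, exists m, N <= m /\ C (eta m).

Lemma past_chain_in_cofinal_past_set (C : X -> Prop) :
  past_set rel C -> cofinal_in C -> set_incl (Ipast rel (range eta)) C.
Proof.
  intros HC Hcof y [z [[n <-] Hy]].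
  destruct (Hcof (S n)) as [m [Hm Cm]].
  apply HC. exists (eta m). split; [exact Cm |].
  eapply rel_trans; [exact Hy | apply chain_lt; lia].
Qed.

Lemma cofinal_in_union (A B : X -> Prop) :
  (forall n, A (eta n) \/ B (eta n)) -> cofinal_in A \/ cofinal_in B.
Proof.
  intro Hcover. destruct (classic (cofinal_in A)) as [HA | HnA]; [left; exact HA | right].
  apply not_all_ex_not in HnA. destruct HnA as [N0 HN0].
  intro N. exists (N + N0). split; [lia |].
  destruct (Hcover (N + N0)) as [HAn | HBn]; [| exact HBn].
  exfalso. apply HN0. exists (N + N0). split; [lia | exact HAn].
Qed.

Lemma past_chain_IP : IP rel (Ipast rel (range eta)).
Proof.
  split; [| split].
  - exists (eta 0). apply chain_in_past.
  - intro y. split.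
    + intros [z [[n <-] Hy]]. exists (eta n). split; [apply chain_in_past | exact Hy].
    + intros [z [[w [[n <-] Hz]] Hy]].
      exists (eta n). split; [exists n; reflexivity | exact (rel_trans _ _ _ Hy Hz)].
  - intros [A [B [HA [HB [HnA [HnB Hunion]]]]]].
    assert (Hcover : forall n, A (eta n) \/ B (eta n))
      by (intro n; apply Hunion, chain_in_past).
    (* the part meeting the chain cofinally is the whole past *)
    assert (Hwhole : forall C, past_set rel C -> set_incl C (Ipast rel (range eta)) ->
                       cofinal_in C -> set_eq C (Ipast rel (range eta))).
    { intros C HC HCsub Hcof y. split;
        [apply HCsub | apply past_chain_in_cofinal_past_set; assumption]. }
    destruct (cofinal_in_union A B Hcover) as [HcA | HcB].
    + apply HnA, Hwhole; [exact HA | | exact HcA].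
      intros y Ay. apply Hunion. left. exact Ay.
    + apply HnB, Hwhole; [exact HB | | exact HcB].
      intros y By. apply Hunion. right. exact By.
Qed.

Lemma LS_future_above (y : X) :
  LS (fun n => Ifut_pt rel (eta n)) y -> forall n, rel (eta n) y.
Proof.
  intros Hy n. destruct (Hy (S n)) as [m [Hm Hmy]].
  apply (rel_trans _ (eta m)); [apply chain_lt; lia | exact Hmy].
Qed.

Lemma common_future_in_LI :
  set_incl (common_future rel (range eta)) (LI (fun n => Ifut_pt rel (eta n))).
Proof.
  intros y [w [Hw Hwy]]. exists 0. intros n _.
  eapply rel_trans; [apply Hw; exists n; reflexivity | exact Hwy].
Qed.

Lemma future_set_in_common_future (Q : X -> Prop) :
  future_set rel Q -> set_incl Q (LS (fun n => Ifut_pt rel (eta n))) ->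
  set_incl Q (common_future rel (range eta)).
Proof.
  intros HQ HQLS y Qy. apply HQ in Qy. destruct Qy as [w [Qw Hwy]].
  exists w. split; [| exact Hwy].
  intros z [n <-]. apply LS_future_above, HQLS, Qw.
Qed.

End FutureChain.

Theorem limits_of_future_chain {X : Type} (rel : X -> X -> Prop) :
  (forall x y z, rel x y -> rel y z -> rel x z) ->
  past_regular rel ->
  forall eta : nat -> X, fut_chain rel eta -> forall x : X,
    (Lhat rel eta x <-> set_eq (Ipast_pt rel x) (Ipast rel (range eta))) /\
    (Lcheck rel eta x <-> maximal_IF_in rel (Ifut_pt rel x) (common_future rel (range eta))).
Proof.
  intros Htr Hpreg eta Hc x.
  pose proof (past_chain_IP rel Htr eta Hc) as HIP.
  assert (HLS : set_eq (Ipast rel (range eta)) (LS (fun n => Ipast_pt rel (eta n))))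
    by (intro y; symmetry; apply LS_past_chain; assumption).
  assert (Hshrink : forall F,
            maximal_IF_in rel F (common_future rel (range eta)) <->
            maximal_IF_in rel F (LS (fun n => Ifut_pt rel (eta n))))
    by (intro F; apply maximal_IF_in_shrink;
        [ intros y Hy; apply LI_incl_LS, common_future_in_LI; assumption
        | intros Q [_ [HQ _]]; apply future_set_in_common_future; assumption ]).
  split; split.
  - intros [_ Hmax]. apply (maximal_IP_in_IP rel _ _ _ (Hpreg x) HIP HLS), Hmax.
  - intro Heq. split.
    + intros y Hy. apply past_chain_in_LI, Heq; assumption.
    + apply (maximal_IP_in_IP rel _ _ _ (Hpreg x) HIP HLS), Heq.
  - intros [_ Hmax]. apply Hshrink, Hmax.
  - intro Hmax. split; [| apply Hshrink, Hmax].
    intros y Hy. destruct Hmax as [_ [Hsub _]].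
    apply (common_future_in_LI rel Htr eta), Hsub, Hy.
Qed.

Theorem mainTheorem1 (X : Type) (rel : X -> X -> Prop) :
  chronological rel -> past_regular rel -> future_regular rel ->
  (forall eta : nat -> X, fut_chain rel eta -> forall x : X,
     (Lhat rel eta x <-> set_eq (Ipast_pt rel x) (Ipast rel (range eta))) /\
     (Lcheck rel eta x <-> maximal_IF_in rel (Ifut_pt rel x) (common_future rel (range eta))))
  /\
  (forall eta : nat -> X, past_chain rel eta -> forall x : X,
     (Lcheck rel eta x <-> set_eq (Ifut_pt rel x) (Ifut rel (range eta))) /\
     (Lhat rel eta x <-> maximal_IP_in rel (Ipast_pt rel x) (common_past rel (range eta)))).
Proof.
  intros [Htr _] Hpreg Hfreg. split.
  - exact (limits_of_future_chain rel Htr Hpreg).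
  - (* a past chain for rel is a future chain for the reversed relation *)
    exact (limits_of_future_chain (fun a b => rel b a)
             (fun x y z Hxy Hyz => Htr z y x Hyz Hxy) Hfreg).
Qed.
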